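(* Let $G$ be any graph with maximum degree $\Delta$. For any $\gamma > 1$, not necessarily constant, \[ \Upsilon_2(\mathbf{P}) \leq \Psi_2(\mathbf{P}) \leq \sqrt{ \frac{\gamma \Delta}{2-2/\gamma} }. \] Moreover, for any $\gamma > 0$, $\Psi_2(\mathbf{P}) \geq \sqrt{\Delta}$ and $\Upsilon_2(\mathbf{P}) \geq \sqrt{ \frac{1 + \Delta}{2} }$.
   Context: $G=(V,E)$ has $n$ nodes; $N(u)$ is the neighborhood of $u$ and $\deg(u)=|N(u)|$. The diffusion matrix $\mathbf{P}=\mathbf{P}(\gamma)$ has $\mathbf{P}_{u,v}=\frac{1}{\gamma\Delta}$ for $\{u,v\}\in E$, $\mathbf{P}_{u,u}=1-\frac{\deg(u)}{\gamma\Delta}$, and $0$ otherwise; $\mathbf{P}^t$ is its $t$-th power ($\mathbf{P}^0$ the identity). $[u:v]\in E$ denotes an edge $\{u,v\}$ with $u<v$. The local and refined local $p$-divergences are $\Psi_p(\mathbf{P})=\max_{w\in V} \big( \sum_{t=0}^{\infty}\sum_{[u:v]\in E} |\mathbf{P}^{t}_{w,u}-\mathbf{P}^{t}_{w,v} |^p \big)^{1/p}$ and $\Upsilon_p(\mathbf{P})=\max_{w\in V} \big( \frac{1}{2} \sum_{t=0}^{\infty} \sum_{u\in V} \max_{v \in N(u)} |\mathbf{P}^{t}_{w,u}-\mathbf{P}^{t}_{w,v} |^p \big)^{1/p}$. *)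

From HB Require Import structures.
From mathcomp Require Import all_boot all_order all_algebra.
From mathcomp Require Import all_classical all_reals all_analysis.
Set Implicit Arguments. Unset Strict Implicit. Unset Printing Implicit Defensive.
Import Order.TTheory GRing.Theory Num.Theory.
Local Open Scope ring_scope.

(* A graph on the vertex set 'I_n (nodes 0..n-1) is given by an adjacency
   relation e, required (in the theorem) to be symmetric and irreflexive. *)

Definition deg (n : nat) (e : rel 'I_n) (u : 'I_n) : nat := #|[set v | e u v]|.

Definition maxdeg (n : nat) (e : rel 'I_n) : nat := (\max_(u : 'I_n) deg e u)%N.

Definition Pmat (R : realType) (n : nat) (e : rel 'I_n) (gamma : R) : 'M[R]_n :=
  \matrix_(u, v)
    (if u == v then 1 - (deg e u)%:R / (gamma * (maxdeg e)%:R)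
     else if e u v then 1 / (gamma * (maxdeg e)%:R) else 0).

Definition Psi (R : realType) (n : nat) (e : rel 'I_n) (P : 'M[R]_n) (p : R)
  : \bar R :=
  \big[maxe/-oo%E]_(w : 'I_n)
    poweR (\sum_(0 <= t <oo)
             ((\sum_(u : 'I_n) \sum_(v : 'I_n | (u < v)%N && e u v)
                 `|(P ^+ t) w u - (P ^+ t) w v| `^ p)%:E))%E p^-1.

(* Refined local p-divergence Upsilon_p(P):
   max_w ( 1/2 sum_{t>=0} sum_{u in V} max_{v in N(u)} |P^t_{w,u}-P^t_{w,v}|^p )^(1/p).
   The inner max over an empty neighbourhood is taken to be 0. *)
Definition Upsilon (R : realType) (n : nat) (e : rel 'I_n) (P : 'M[R]_n) (p : R)
  : \bar R :=
  \big[maxe/-oo%E]_(w : 'I_n)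
    poweR ((2^-1)%:E *
           \sum_(0 <= t <oo)
             ((\sum_(u : 'I_n) \big[Num.max/0]_(v : 'I_n | e u v)
                 `|(P ^+ t) w u - (P ^+ t) w v| `^ p)%:E))%E p^-1.

From HB Require Import structures.
From mathcomp Require Import all_boot all_order all_algebra.
From mathcomp Require Import all_classical all_reals all_analysis.
From mathcomp Require Import ring lra.
Set Implicit Arguments. Unset Strict Implicit. Unset Printing Implicit Defensive.
Import Order.TTheory GRing.Theory Num.Theory.
Local Open Scope ring_scope.

(* For a row x = P^t e_w, one diffusion step is x |-> x - L x / (gamma Delta),
   with L the graph Laplacian.  Since <x, L x> is the edge energy
   E(x) = sum_{edges} (x_u - x_v)^2 and |L x|^2 <= 2 Delta E(x) by
   Cauchy-Schwarz, each step lowers |x|^2 by at least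
   (2 - 2/gamma) E(x) / (gamma Delta); telescoping from |e_w|^2 = 1 bounds
   sum_t E(P^t e_w), which is Psi_2^2 at w, by gamma Delta / (2 - 2/gamma).
   The lower bounds come from the t = 0 term alone at a vertex of maximum
   degree, and Upsilon <= Psi because a maximum over the neighbours of u is at
   most their sum, and summing over ordered adjacent pairs counts each edge
   twice. *)

Lemma sqr_sum_le_card (R : realFieldType) (I : finType) (P : pred I) (a : I -> R) :
  (\sum_(i | P i) a i) ^+ 2 <= #|P|%:R * \sum_(i | P i) a i ^+ 2.
Proof.
set S1 := \sum_(i | P i) a i; set S2 := \sum_(i | P i) a i ^+ 2.
have card_sum : \sum_(i | P i) (1 : R) = #|P|%:R.
  by rewrite sumr_const; congr _%:R; apply: eq_card.
have sum_dev_sqr : \sum_(i | P i) \sum_(j | P j) (a i - a j) ^+ 2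
    = 2 * (#|P|%:R * S2 - S1 ^+ 2).
  rewrite (eq_bigr (fun i => a i ^+ 2 * #|P|%:R - 2 * a i * S1 + S2)); last first.
    move=> i _; rewrite -card_sum /S1 /S2 mulr_sumr mulr_sumr -sumrB -big_split /=.
    by apply: eq_bigr => j _; ring.
  rewrite big_split sumrB /= -!mulr_suml -/S2 -mulr_sumr -/S1 sumr_const -mulr_natl.
  ring.
have : 0 <= \sum_(i | P i) \sum_(j | P j) (a i - a j) ^+ 2.
  by do 2!(apply: sumr_ge0 => ? _); exact: sqr_ge0.
rewrite sum_dev_sqr; lra.
Qed.

Lemma sum_le_telescope (R : numDomainType) (a b : nat -> R) (K : R) :
  (forall t, a t <= K * (b t - b t.+1)) ->
  forall T, \sum_(0 <= t < T) a t <= K * (b 0%N - b T).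
Proof.
move=> ab T; apply: le_trans (ler_sum _ (fun t _ => ab t)) _.
rewrite -mulr_sumr (_ : \sum_(0 <= t < T) (b t - b t.+1) = b 0%N - b T) //.
by rewrite -[RHS]opprB -telescope_sumr // -sumrN; apply: eq_bigr => t _; rewrite opprB.
Qed.

Lemma nneseries_le (R : realType) (u : nat -> R) (c : R) :
  (forall t, 0 <= u t) -> (forall T, \sum_(0 <= t < T) u t <= c) ->
  (\sum_(0 <= t <oo) (u t)%:E <= c%:E)%E.
Proof.
move=> u_ge0 u_le; apply: lime_le.
  by apply: is_cvg_nneseries => t _ _; rewrite lee_fin.
by apply: nearW => T; rewrite sumEFin lee_fin.
Qed.

Lemma ge0_le_poweR (R : realType) (r : R) (x y : \bar R) :
  0 <= r -> (0 <= x)%E -> (x <= y)%E -> (x `^ r <= y `^ r)%E.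
Proof.
move=> r_ge0 x_ge0 xy; apply: gt0_ler_poweR => //; rewrite in_itv /= leey andbT //.
exact: le_trans xy.
Qed.

Section Laplacian.

Variables (R : realFieldType) (n : nat) (e : rel 'I_n).
Hypotheses (e_sym : symmetric e) (e_irr : irreflexive e).

Lemma sum_adj_swap (F : 'I_n -> 'I_n -> R) :
  \sum_u \sum_(v | e u v) F u v = \sum_u \sum_(v | e u v) F v u.
Proof.
under eq_bigr do rewrite big_mkcond; rewrite exchange_big /=.
by apply: eq_bigr => u _; rewrite [RHS]big_mkcond; apply: eq_bigr => v _; rewrite e_sym.
Qed.

Lemma sum_adj_sym (F : 'I_n -> 'I_n -> R) : (forall u v, F u v = F v u) ->
  \sum_(u : 'I_n) \sum_(v : 'I_n | e u v) F u v =
  2 * \sum_(u : 'I_n) \sum_(v : 'I_n | (u < v)%N && e u v) F u v.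
Proof.
move=> F_sym.
have split_nbr (u : 'I_n) : \sum_(v | e u v) F u v =
    \sum_(v : 'I_n | (u < v)%N && e u v) F u v +
    \sum_(v : 'I_n | (v < u)%N && e u v) F u v.
  rewrite (bigID (fun v : 'I_n => (u < v)%N)) /=; congr (_ + _); apply: eq_bigl => v.
    by rewrite andbC.
  rewrite andbC -leqNgt leq_eqVlt; case: eqP => [/val_inj -> | _] //=.
  by rewrite e_irr !andbF.
rewrite (eq_bigr _ (fun u _ => split_nbr u)) big_split /= mulr2n mulrDl mul1r.
congr (_ + _); under eq_bigr do rewrite big_mkcond; rewrite exchange_big /=.
apply: eq_bigr => u _; rewrite [RHS]big_mkcond; apply: eq_bigr => v _.
by rewrite e_sym F_sym.
Qed.

Lemma deg_sum (u : 'I_n) : (deg e u)%:R = \sum_(v | e u v) (1 : R).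
Proof. by rewrite /deg -sumr_const; apply: eq_bigl => v; rewrite inE. Qed.

Lemma deg_le_maxdeg (u : 'I_n) : (deg e u <= maxdeg e)%N.
Proof. exact: (leq_bigmax (F := fun u => deg e u)). Qed.

Definition lap (x : 'I_n -> R) (u : 'I_n) : R := \sum_(v | e u v) (x u - x v).

Definition energy (x : 'I_n -> R) : R :=
  \sum_(u : 'I_n) \sum_(v : 'I_n | (u < v)%N && e u v) (x u - x v) ^+ 2.

Definition sqnorm (x : 'I_n -> R) : R := \sum_u x u ^+ 2.

Lemma sqnorm_ge0 x : 0 <= sqnorm x.
Proof. by apply: sumr_ge0 => u _; exact: sqr_ge0. Qed.

Lemma sum_mul_lap x : \sum_u x u * lap x u = energy x.
Proof.
apply: (@mulfI _ 2); first by rewrite pnatr_eq0.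
rewrite -sum_adj_sym; last first.
  by move=> u v; rewrite -sqrrN opprB.
under eq_bigr do rewrite mulr_sumr.
rewrite mulr2n mulrDl mul1r [X in X + _ = _]sum_adj_swap -big_split /=.
by apply: eq_bigr => u _; rewrite -big_split /=; apply: eq_bigr => v _; ring.
Qed.

Lemma sum_lap_sqr_le x : \sum_u lap x u ^+ 2 <= 2 * (maxdeg e)%:R * energy x.
Proof.
rewrite -mulrA mulrCA -sum_adj_sym; last by move=> u v; rewrite -sqrrN opprB.
rewrite mulr_sumr; apply: ler_sum => u _.
rewrite /lap; apply: le_trans (sqr_sum_le_card (e u) (fun v => x u - x v)) _.
apply: ler_wpM2r; first by apply: sumr_ge0 => v _; exact: sqr_ge0.
by rewrite ler_nat (leq_trans _ (deg_le_maxdeg u)) // /deg cardsE.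
Qed.

Lemma sqnorm_lap_step x (c : R) : c != 0 ->
  (2 / c - 2 * (maxdeg e)%:R / c ^+ 2) * energy x <=
  sqnorm x - sqnorm (fun u => x u - lap x u / c).
Proof.
move=> c_neq0.
have expand : sqnorm (fun u => x u - lap x u / c) =
    sqnorm x - 2 / c * \sum_u x u * lap x u + (\sum_u lap x u ^+ 2) / c ^+ 2.
  rewrite /sqnorm mulr_sumr mulr_suml -sumrB -big_split /=.
  by apply: eq_bigr => u _; field.
rewrite expand sum_mul_lap.
have : (\sum_u lap x u ^+ 2) / c ^+ 2 <= 2 * (maxdeg e)%:R * energy x / c ^+ 2.
  by apply: ler_wpM2r; [rewrite invr_ge0 sqr_ge0 | exact: sum_lap_sqr_le].
rewrite mulrBl mulrAC (mulrAC 2); lra.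
Qed.

Definition kdelta (w : 'I_n) (v : 'I_n) : R := (w == v)%:R.

Lemma energy_kdelta w : energy (kdelta w) = (deg e w)%:R.
Proof.
rewrite -sum_mul_lap // (bigD1 w) //= big1 ?addr0 => [|u]; last first.
  by rewrite /kdelta eq_sym => /negbTE ->; rewrite mul0r.
rewrite /kdelta eqxx mul1r /lap deg_sum; apply: eq_bigr => v ewv.
by rewrite eqxx; case: eqVneq ewv => [<-|]; rewrite ?e_irr ?subr0.
Qed.

Lemma sqnorm_kdelta w : sqnorm (kdelta w) = 1.
Proof.
rewrite /sqnorm (bigD1 w) //= big1 => [|u]; first by rewrite /kdelta eqxx expr1n addr0.
by rewrite /kdelta eq_sym => /negbTE ->; rewrite expr0n.
Qed.

End Laplacian.

Arguments kdelta {R n} w v.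

Section Diffusion.

Variables (R : realType) (n : nat) (e : rel 'I_n) (gamma : R).
Hypotheses (e_sym : symmetric e) (e_irr : irreflexive e).

Local Notation row t w := (fun v => (Pmat e gamma ^+ t) w v).

Lemma Pmat_row0 w : row 0%N w = kdelta w.
Proof. by apply: funext => v; rewrite expr0 mxE. Qed.

Lemma Pmat_rowS t w :
  row t.+1 w = (fun u => row t w u - lap e (row t w) u / (gamma * (maxdeg e)%:R)).
Proof.
apply: funext => u; rewrite exprSr mxE (bigD1 u) //= mxE eqxx.
set c := gamma * (maxdeg e)%:R; set x := row t w.
have -> : \sum_(k < n | k != u) (Pmat e gamma ^+ t) w k * Pmat e gamma k u =
    \sum_(k | e u k) x k / c.
  rewrite big_mkcond [RHS]big_mkcond; apply: eq_bigr => k _; rewrite mxE -/c /x.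
  case: eqVneq => [->|_]; first by rewrite e_irr.
  by rewrite e_sym; case: (e u k); rewrite ?mulr0 ?mul1r.
have -> : lap e x u = (deg e u)%:R * x u - \sum_(k | e u k) x k.
  by rewrite /lap sumrB deg_sum mulr_suml; under [in RHS]eq_bigr do rewrite mul1r.
rewrite -mulr_suml; change ((Pmat e gamma ^+ t) w u) with (x u); ring.
Qed.

Lemma Pmat_bound_ge0 : 1 < gamma -> 0 <= gamma * (maxdeg e)%:R / (2 - 2 / gamma).
Proof.
move=> gamma_gt1; have inv_lt1 : gamma^-1 < 1 by rewrite invf_lt1 // (lt_trans ltr01).
apply: divr_ge0; last lra.
by rewrite mulr_ge0 ?ler0n // ltW // (lt_trans ltr01).
Qed.

Lemma sum_energy_Pmat_le w T : 1 < gamma -> (0 < maxdeg e)%N ->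
  \sum_(0 <= t < T) energy e (row t w) <=
  gamma * (maxdeg e)%:R / (2 - 2 / gamma).
Proof.
move=> gamma_gt1 Delta_gt0.
set D : R := (maxdeg e)%:R; set K := gamma * D / (2 - 2 / gamma).
have D_gt0 : 0 < D by rewrite ltr0n.
have gamma_gt0 : 0 < gamma by lra.
have denom_gt0 : 0 < 2 - 2 / gamma.
  have : gamma^-1 < 1 by rewrite invf_lt1.
  lra.
(* K is the reciprocal of the decay rate of [sqnorm_lap_step] at c = gamma Delta. *)
have K_step : K * (2 / (gamma * D) - 2 * D / (gamma * D) ^+ 2) = 1.
  rewrite /K; field; rewrite !gt_eqF // ?mulr_gt0 //; lra.
apply: le_trans (sum_le_telescope (K := K) (b := fun t => sqnorm (row t w)) _ T) _.
  move=> t; rewrite -[X in X <= _]mul1r -K_step -[K * _ * _]mulrA Pmat_rowS.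
  apply: ler_wpM2l; first exact: Pmat_bound_ge0.
  by apply: sqnorm_lap_step => //; rewrite mulf_neq0 ?gt_eqF.
by rewrite Pmat_row0 sqnorm_kdelta -[X in _ <= X]mulr1 ler_wpM2l ?gerBl ?sqnorm_ge0 ?Pmat_bound_ge0.
Qed.

End Diffusion.

Section Divergences.

Variables (R : realType) (n : nat) (e : rel 'I_n) (P : 'M[R]_n) (p : R).
Hypothesis p_gt0 : 0 < p.

Local Notation dist t w u v := (`|(P ^+ t) w u - (P ^+ t) w v| `^ p).

Definition edge_term (w : 'I_n) (t : nat) : R :=
  \sum_(u : 'I_n) \sum_(v : 'I_n | (u < v)%N && e u v) dist t w u v.

Definition nbr_term (w : 'I_n) (t : nat) : R :=
  \sum_(u : 'I_n) \big[Num.max/0]_(v : 'I_n | e u v) dist t w u v.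

Lemma edge_term_ge0 w t : 0 <= edge_term w t.
Proof. by do 2!(apply: sumr_ge0 => ? _); exact: powR_ge0. Qed.

Lemma nbr_term_ge0 w t : 0 <= nbr_term w t.
Proof. by apply: sumr_ge0 => u _; exact: bigmax_ge_id. Qed.

Lemma nneseries_edge_term_ge0 w :
  (0 <= \sum_(0 <= t <oo) (edge_term w t)%:E)%E.
Proof. by apply: nneseries_ge0 => t _ _; rewrite lee_fin edge_term_ge0. Qed.

Lemma nneseries_nbr_term_ge0 w :
  (0 <= \sum_(0 <= t <oo) (nbr_term w t)%:E)%E.
Proof. by apply: nneseries_ge0 => t _ _; rewrite lee_fin nbr_term_ge0. Qed.

Lemma nbr_term_le_edge_term w t : symmetric e -> irreflexive e ->
  nbr_term w t <= 2 * edge_term w t.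
Proof.
move=> e_sym e_irr; rewrite /edge_term -sum_adj_sym //; last first.
  by move=> u v; rewrite distrC.
apply: ler_sum => u _; apply/bigmax_leP; split.
  by apply: sumr_ge0 => v _; exact: powR_ge0.
move=> v euv; rewrite (bigD1 v) //= lerDl.
by apply: sumr_ge0 => k _; exact: powR_ge0.
Qed.

Lemma Upsilon_le_Psi : symmetric e -> irreflexive e ->
  (Upsilon e P p <= Psi e P p)%E.
Proof.
move=> e_sym e_irr; apply: le_bigmax2 => w _.
apply: ge0_le_poweR; first by rewrite invr_ge0 ltW.
  by apply: mule_ge0; rewrite ?lee_fin ?invr_ge0 // nneseries_nbr_term_ge0.
rewrite -nneseriesZl; last by move=> t _; rewrite lee_fin nbr_term_ge0.
apply: lee_nneseries => [t _ _|t _].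
  by rewrite -EFinM lee_fin mulr_ge0 ?invr_ge0 ?nbr_term_ge0.
rewrite -EFinM lee_fin ler_pdivrMl //.
exact: nbr_term_le_edge_term.
Qed.

Lemma Psi_le (K : R) : 0 <= K ->
  (forall w T, \sum_(0 <= t < T) edge_term w t <= K) ->
  (Psi e P p <= (K `^ p^-1)%:E)%E.
Proof.
move=> K_ge0 partial_le; apply/bigmax_leP; split=> [|w _]; first by rewrite leNye.
rewrite -poweR_EFin; apply: ge0_le_poweR; first by rewrite invr_ge0 ltW.
  exact: nneseries_edge_term_ge0.
by apply: nneseries_le => [t|T]; [exact: edge_term_ge0 | exact: partial_le].
Qed.

Lemma Psi_ge_edge_term0 (c : R) w : 0 <= c -> c <= edge_term w 0 ->
  ((c `^ p^-1)%:E <= Psi e P p)%E.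
Proof.
move=> c_ge0 c_le; apply: le_trans (le_bigmax _ _ w); rewrite -poweR_EFin.
apply: ge0_le_poweR; [by rewrite invr_ge0 ltW | by rewrite lee_fin |].
apply: le_trans (nneseries_lim_ge 1 _); last first.
  by move=> t _ _; rewrite lee_fin edge_term_ge0.
by rewrite big_nat1 lee_fin.
Qed.

Lemma Upsilon_ge_nbr_term0 (c : R) w : 0 <= c -> c <= nbr_term w 0 / 2 ->
  ((c `^ p^-1)%:E <= Upsilon e P p)%E.
Proof.
move=> c_ge0 c_le; apply: le_trans (le_bigmax _ _ w); rewrite -poweR_EFin.
apply: ge0_le_poweR; [by rewrite invr_ge0 ltW | by rewrite lee_fin |].
apply: (@le_trans _ _ ((2^-1)%:E * \sum_(0 <= t < 1) (nbr_term w t)%:E)%E).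
  by rewrite big_nat1 -EFinM lee_fin mulrC.
apply: lee_wpmul2l; first by rewrite lee_fin invr_ge0.
by apply: nneseries_lim_ge => t _ _; rewrite lee_fin nbr_term_ge0.
Qed.

End Divergences.

Lemma edge_term_sqr (R : realType) n (e : rel 'I_n) (P : 'M[R]_n) w t :
  edge_term e P 2 w t = energy e (fun v => (P ^+ t) w v).
Proof.
apply: eq_bigr => u _; apply: eq_bigr => v _.
by rewrite (powR_mulrn 2) // real_normK // num_real.
Qed.

Section InitialTerms.

Variables (R : realType) (n : nat) (e : rel 'I_n) (P : 'M[R]_n) (p : R).
Hypotheses (e_sym : symmetric e) (e_irr : irreflexive e) (p_gt0 : 0 < p).

Lemma powR_kdelta_sub (w u v : 'I_n) :
  `|kdelta w u - kdelta w v| `^ p = (kdelta w u - kdelta w v) ^+ 2 :> R.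
Proof.
rewrite /kdelta; case: (w == u); case: (w == v) => /=.
- by rewrite subrr normr0 powR0 ?gt_eqF // expr0n.
- by rewrite subr0 normr1 powR1 expr1n.
- by rewrite sub0r normrN normr1 powR1 sqrrN expr1n.
- by rewrite subrr normr0 powR0 ?gt_eqF // expr0n.
Qed.

Lemma edge_term0 w : edge_term e P p w 0 = (deg e w)%:R.
Proof.
rewrite -energy_kdelta //; apply: eq_bigr => u _; apply: eq_bigr => v _.
by rewrite !expr0 !mxE; exact: powR_kdelta_sub.
Qed.

Lemma nbr_term0_ge w : (0 < deg e w)%N -> 1 + (deg e w)%:R <= nbr_term e P p w 0.
Proof.
move=> deg_gt0.
have max_ge1 u : (u == w) || e w u ->
    1 <= \big[Num.max/0]_(v | e u v) `|(P ^+ 0) w u - (P ^+ 0) w v| `^ p.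
  case: eqVneq => [->|u_neq_w] /= ewu.
    have [v] := card_gt0P deg_gt0; rewrite inE => ewv.
    apply: (bigmax_sup v) => //; rewrite expr0 !mxE eqxx.
    by case: eqVneq ewv => [<-|]; rewrite ?e_irr // subr0 normr1 powR1.
  apply: (bigmax_sup w); first by rewrite e_sym.
  by rewrite expr0 !mxE eqxx eq_sym (negbTE u_neq_w) sub0r normrN normr1 powR1.
rewrite /nbr_term (bigID (fun u => (u == w) || e w u)) /= -[X in X <= _]addr0.
apply: lerD; last by apply: sumr_ge0 => u _; exact: bigmax_ge_id.
apply: le_trans (ler_sum _ max_ge1).
rewrite (bigD1 w) ?eqxx //= deg_sum lerD2l (eq_bigl (e w)) // => u.
by case: eqVneq => [->|] /=; rewrite ?e_irr ?andbT.
Qed.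

End InitialTerms.

Lemma maxdeg_attained n (e : rel 'I_n) : (0 < maxdeg e)%N -> exists w, maxdeg e = deg e w.
Proof.
move=> Delta_gt0; have n_gt0 : (0 < #|'I_n|)%N.
  by rewrite card_ord; case: n e Delta_gt0 => // e0; rewrite /maxdeg big_ord0.
by have [w max_w] := bigop.eq_bigmax (fun u => deg e u) n_gt0; exists w.
Qed.

Theorem theorem5p3 (R : realType) (n : nat) (e : rel 'I_n)
  (e_sym : symmetric e) (e_irr : irreflexive e)
  (Delta_pos : (0 < maxdeg e)%N) :
  (forall gamma : R, 1 < gamma ->
     (Upsilon e (Pmat e gamma) 2 <= Psi e (Pmat e gamma) 2)%E /\
     (Psi e (Pmat e gamma) 2 <=
        (Num.sqrt (gamma * (maxdeg e)%:R / (2 - 2 / gamma)))%:E)%E) /\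
  (forall gamma : R, 0 < gamma ->
     ((Num.sqrt (maxdeg e)%:R)%:E <= Psi e (Pmat e gamma) 2)%E /\
     ((Num.sqrt ((1 + (maxdeg e)%:R) / 2))%:E <= Upsilon e (Pmat e gamma) 2)%E).
Proof.
have [w0 Delta_w0] := maxdeg_attained Delta_pos.
split=> gamma gamma_gt; split.
- exact: Upsilon_le_Psi.
- rewrite -powR12_sqrt ?Pmat_bound_ge0 //; apply: Psi_le; rewrite ?Pmat_bound_ge0 //.
  move=> w T; under eq_bigr do rewrite edge_term_sqr.
  exact: sum_energy_Pmat_le.
- rewrite -powR12_sqrt //; apply: (Psi_ge_edge_term0 _ (w := w0)) => //.
  by rewrite edge_term0 // Delta_w0.
- rewrite -powR12_sqrt; last by rewrite divr_ge0 // addr_ge0.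
  apply: (Upsilon_ge_nbr_term0 _ (w := w0)) => //.
  by rewrite ler_pM2r // Delta_w0 nbr_term0_ge // -Delta_w0.
Qed.
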